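(* Let $X\subseteq Z$ and $X'\subseteq Z'$ be finite metric spaces with $\varepsilon=d_{GH}((X,Z),(X',Z'))$, and let $f_0,f'_0$ be the linear maps induced by the inclusions. Then there exists a $2\varepsilon$-matching $\sigma^\infty\colon\mathrm{Rep}\,D(f_0)_\infty\nrightarrow\mathrm{Rep}\,D(f'_0)_\infty$, i.e. a partial matching such that matched elements $((\infty,b),i)\mapsto((\infty,b'),j)$ satisfy $|b-b'|\le2\varepsilon$, and every unmatched element $((\infty,b),i)$ of either side satisfies $b\le 2\varepsilon$.
   Context: All vector spaces are over $\mathbb{Z}_2$. For a finite metric space $X$, $\mathrm{VR}_r(X)$ is the graph on $X$ with edges $[x,y]$ for $d^X(x,y)\le r$, and $\mathrm{PH}_0(X)$ is the persistence module $r\mapsto H_0(\mathrm{VR}_r(X))$ with structure maps $\rho_{rs}$ induced by inclusion; $m^U(b)$ is the multiplicity of the finite bar $[0,b)$ of $U$. For $X\subseteq Z$, $V=\mathrm{PH}_0(X)$, $U=\mathrm{PH}_0(Z)$, $f_0\colon V_0\to U_0$ induced by inclusion; with $\ker^+_b(U)=\ker\rho^U_{0b}$, $\ker^-_b(U)=\bigcup_{0\le r<b}\ker\rho^U_{0r}$, $\mathcal{M}^0_f(a,b)=\dim\frac{f_0(\ker^+_a V)\cap \ker^+_b U}{f_0(\ker^-_a V)\cap\ker^+_b U+f_0(\ker^+_a V)\cap \ker^-_b U}$ and $N_f(b)=m^U(b)-\sum_{a>0}\mathcal{M}^0_f(a,b)$. $D(f_0)_\infty$ is the multiset of pairs $(\infty,b)$,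 $b>0$, with multiplicity $N_f(b)$ (only positive multiplicities kept). $\mathrm{Rep}(S,m)=\{(s,\ell):1\le\ell\le m(s)\}$; partial matching = bijection between subsets. $d_{GH}$ of pairs is the infimum over metric spaces $M$ and isometric embeddings $\gamma_Z,\gamma_{Z'}$ of $\max\{d^M_H(\gamma_Z(X),\gamma_{Z'}(X')),d^M_H(\gamma_Z(Z),\gamma_{Z'}(Z'))\}$. *)

From HB Require Import structures.
From mathcomp Require Import all_boot all_order all_algebra.
From mathcomp Require Import boolp classical_sets reals.
Set Implicit Arguments. Unset Strict Implicit. Unset Printing Implicit Defensive.
Import Order.TTheory GRing.Theory Num.Theory.
Local Open Scope ring_scope.

Section Defs.
Variable R : realType.

Definition is_metric (M : Type) (d : M -> M -> R) : Prop :=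
  (forall x y, d x y = 0 <-> x = y) /\
  (forall x y, d x y = d y x) /\
  (forall x y z, d x z <= d x y + d y z).

Definition isometric (A B : Type) (dA : A -> A -> R) (dB : B -> B -> R)
  (g : A -> B) : Prop := forall x y, dB (g x) (g y) = dA x y.

Local Open Scope classical_set_scope.
Definition hausdorff (M : Type) (d : M -> M -> R) (A B : set M) : R :=
  Num.max (sup [set inf [set d a b | b in B] | a in A])
          (sup [set inf [set d a b | a in A] | b in B]).

Definition fset_to_set (T : finType) (X : {set T}) : set T := fun x => x \in X.

(** Gromov--Hausdorff distance of pairs (X,Z),(X',Z'), where Z (resp. Z')
    is the finite type T (resp. T') with metric d (resp. d') and X (resp. X')
    a subset: infimum over all metric spaces M and isometric embeddings. *)
Definition dGH_values (T T' : finType) (d : T -> T -> R) (d' : T' -> T' -> R)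
  (X : {set T}) (X' : {set T'}) : set R :=
  [set v | exists (M : Type) (dM : M -> M -> R) (g : T -> M) (g' : T' -> M),
     [/\ is_metric dM, isometric d dM g, isometric d' dM g' &
      v = Num.max (hausdorff dM (g @` fset_to_set X) (g' @` fset_to_set X'))
                  (hausdorff dM (range g) (range g'))]].

Definition dGH (T T' : finType) (d : T -> T -> R) (d' : T' -> T' -> R)
  (X : {set T}) (X' : {set T'}) : R := inf (dGH_values d d' X X').
End Defs.

Local Open Scope ring_scope.

(** 0-chains of a finite metric space S over Z_2: C_0(VR_0 S) = H_0(VR_0 S). *)
Definition C0 (S : finType) := 'rV['F_2]_#|S|.
Definition ev (S : finType) (x : S) : C0 S := delta_mx 0 (enum_rank x).

(** ker^+_r = ker rho_{0r} = image of the boundary of VR_r(S) in C_0,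
    i.e. span of e_x + e_y over edges d(x,y) <= r. *)
Definition kerplus (R : realType) (S : finType) (d : S -> S -> R) (r : R) :=
  (\sum_(p : S * S | (d p.1 p.2 <= r)%R) <<ev p.1 + ev p.2>>)%MS.

(** ker^-_b = union over 0 <= r < b of ker rho_{0r}
    = span of e_x + e_y over edges d(x,y) < b  (for b > 0). *)
Definition kerminus (R : realType) (S : finType) (d : S -> S -> R) (b : R) :=
  (\sum_(p : S * S | (d p.1 p.2 < b)%R) <<ev p.1 + ev p.2>>)%MS.

Definition qdim (m n p : nat) (A : 'M['F_2]_(m, n)) (B : 'M['F_2]_(p, n)) : nat :=
  (\rank A - \rank (A :&: B))%N.

(** m^U(b): multiplicity of the bar [0,b) of PH_0(S) = dim ker^+_b / ker^-_b *)
Definition mult (R : realType) (S : finType) (d : S -> S -> R) (b : R) : nat :=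
  qdim (kerplus d b) (kerminus d b).

Definition subX (T : finType) (X : {set T}) := {x : T | x \in X}.
Definition dsub (R : realType) (T : finType) (d : T -> T -> R) (X : {set T})
  (x y : subX X) : R := d (val x) (val y).

(** Matrix of f_0 : V_0 = C_0(X) -> U_0 = C_0(Z), induced by inclusion. *)
Definition f0mx (T : finType) (X : {set T}) : 'M['F_2]_(#|{: subX X}|, #|T|) :=
  \matrix_(i < #|{: subX X}|) ev (val (enum_val i)).

Definition Mf (R : realType) (T : finType) (d : T -> T -> R) (X : {set T})
  (a b : R) : nat :=
  let F := f0mx X in
  let dX := dsub d (X := X) in
  let num := (kerplus dX a *m F :&: kerplus d b)%MS in
  let den := ((kerminus dX a *m F :&: kerplus d b) +
              (kerplus dX a *m F :&: kerminus d b))%MS in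
  qdim num den.

(** positive distances occurring in X (the only a > 0 with M^0_f(a,b) possibly
    nonzero, since otherwise ker^+_a V = ker^-_a V) *)
Definition pos_dists (R : realType) (T : finType) (d : T -> T -> R)
  (X : {set T}) : seq R :=
  undup [seq d p.1 p.2 | p <- enum [set p : T * T | (p.1 \in X) && (p.2 \in X)]
                       & 0 < d p.1 p.2].

Definition Nf (R : realType) (T : finType) (d : T -> T -> R) (X : {set T})
  (b : R) : int :=
  (mult d b)%:Z - (\sum_(a <- pos_dists d X) Mf d X a b)%:Z.

(** Rep D(f_0)_infty : pairs (b, l) with b > 0 and 1 <= l <= N_f(b). *)
Definition inRep (R : realType) (N : R -> int) (s : R * nat) : Prop :=
  0 < s.1 /\ (1 <= s.2)%N /\ s.2%:Z <= N s.1.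

(** partial matching sigma : Rep A -/-> Rep B, encoded as a map that is
    defined (Some) exactly on the matched elements of Rep A, lands in Rep B,
    and is injective there. *)
Definition partial_matching (R : realType) (A B : R * nat -> Prop)
  (sigma : R * nat -> option (R * nat)) : Prop :=
  (forall s t, A s -> sigma s = Some t -> B t) /\
  (forall s1 s2 t, A s1 -> A s2 -> sigma s1 = Some t -> sigma s2 = Some t ->
     s1 = s2).

Definition delta_matching (R : realType) (delta : R) (A B : R * nat -> Prop)
  (sigma : R * nat -> option (R * nat)) : Prop :=
  [/\ partial_matching A B sigma,
      (forall s t, A s -> sigma s = Some t -> `|s.1 - t.1| <= delta),
      (forall s, A s -> sigma s = None -> s.1 <= delta) &
      (forall t, B t -> (~ exists s, A s /\ sigma s = Some t) -> t.1 <= delta)].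

From HB Require Import structures.
From mathcomp Require Import all_boot all_order all_algebra.
From mathcomp Require Import boolp classical_sets reals.
From mathcomp Require Import zify lra.
Import Order.TTheory GRing.Theory Num.Theory.
Set Implicit Arguments. Unset Strict Implicit.
Local Open Scope ring_scope.

(* Over Z_2, let K_r be the span in C_0(Z) of the edges e_x + e_y of VR_r(Z), and
   A = f_0(ker^+_oo V) the span of the edges inside X.  The M^0_f(a, b) telescope in a,
   so N_f(b) = rank (K_b + A) - rank (K_{<b} + A): the bars of D(f_0)_oo are the jumps
   of r |-> codim (K_r + A), and those dying after r number codim (K_r + A) minus its
   final value.
   For c > 2 d_GH, embeddings witnessing d_GH < c/2 give maps phi : Z -> Z' with
   d'(phi x, phi y) <= d(x, y) + c, phi(X) in X' and c-dense image, and likewise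
   psi : Z' -> Z.  Pushing chains forward along phi gives
   codim (K'_{r+c} + A') <= codim (K_r + A), so at most as many bars of D(f'_0)_oo die
   after r + c as bars of D(f_0)_oo die after r, and symmetrically.  With both
   barcodes sorted by decreasing death, these counts force the i-th bars to be
   c-close (or short when unpaired); the counts are right-continuous in c, so c can
   be taken to be 2 d_GH. *)

Section RankIdentities.
Variable F : fieldType.

Lemma mxrank_adds_caps m1 m2 n (A Am : 'M[F]_(m1, n)) (P Q : 'M[F]_(m2, n)) :
  (Am <= A)%MS -> (Q <= P)%MS ->
  (\rank (Am :&: P + A :&: Q) + \rank (Am :&: Q) =
   \rank (Am :&: P) + \rank (A :&: Q))%N.
Proof.
move=> AmA QP; rewrite -(mxrank_sum_cap (Am :&: P)%MS); congr (_ + _)%N.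
apply/eqmx_rank/andP; split.
  by rewrite !sub_capmx capmxSl (submx_trans (capmxSl _ _) AmA)
    (submx_trans (capmxSr _ _) QP) capmxSr.
rewrite sub_capmx (submx_trans (capmxSl _ _) (capmxSl _ _)).
exact: submx_trans (capmxSr _ _) (capmxSr _ _).
Qed.

Lemma codim_le_of_cover m n k l (Phi : 'M[F]_(m, n)) (S : 'M[F]_(k, m))
    (S' : 'M[F]_(l, n)) :
  (S *m Phi <= S')%MS -> (1%:M <= Phi + S')%MS ->
  (n + \rank S <= m + \rank S')%N.
Proof.
move=> SPhi full.
have PhiS : (Phi <= S' + (S^C)%MS *m Phi)%MS.
  rewrite -{1}[Phi]mul1mx.
  apply: submx_trans (submxMr Phi (submx_full _ (addsmx_compl_full S))) _.
  by rewrite addsmxMr addsmxS.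
have : (n <= \rank (S' + (S^C)%MS *m Phi))%N.
  rewrite -{1}(mxrank1 F n); apply/mxrankS/(submx_trans full).
  by rewrite addsmx_sub PhiS addsmxSl.
have := mxrank_sum_cap S' ((S^C)%MS *m Phi)%MS; have := mxrankM_maxl (S^C)%MS Phi.
have := mxrank_compl S; have := rank_leq_col S; lia.
Qed.

End RankIdentities.

Section Telescope.
Variables (R : realDomainType) (V : zmodType) (P : finType).
Variables (w : P -> R) (G : {set P} -> V).

Lemma telescope_sublevels (s : seq R) (t : R) :
  uniq s -> (forall p, t < w p -> w p \in s) ->
  \sum_(a <- s | t < a) (G [set p | w p <= a] - G [set p | w p < a]) =
  G [set: P] - G [set p | w p <= t].
Proof.
(* Induction on the number of weights above t: the least one, b, contributes
   G[<= b] - G[<= t], and the terms above b telescope by induction. *)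
move=> s_uniq; have [n] := ubnP #|[set p | t < w p]|.
elim: n t => // n IH t card_lt ws.
have no_jump a : (forall p, w p != a) -> G [set p | w p <= a] - G [set p | w p < a] = 0.
  move=> nw; suff -> : [set p | w p < a] = [set p | w p <= a] by rewrite subrr.
  by apply/setP => p; rewrite !inE lt_def eq_sym nw.
case: (pickP (fun p => t < w p)) => [p0 tp0|above0]; last first.
  have below p : w p <= t by rewrite leNgt above0.
  have -> : [set p | w p <= t] = [set: P] by apply/setP => p; rewrite !inE below.
  rewrite subrr big1 // => a ta; apply: no_jump => p; apply: contraTneq ta => <-.
  by rewrite -leNgt below.
case: (arg_minP (P := fun p => t < w p) w tp0) => p1 tb minp1.
set b := w p1 in tb minp1 *.
have gap p : t < w p -> w p < b -> False.
  by move=> tp /lt_le_trans /(_ (minp1 p tp)); rewrite ltxx.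
rewrite (bigID (fun a => b < a)) /= (eq_bigl (fun a => b < a)) => [|a]; last first.
  by rewrite andb_idl // => /(lt_trans tb).
have card_b : (#|[set p | (b < w p)%R]| < n)%N.
  rewrite -ltnS; apply: leq_trans card_lt; rewrite ltnS; apply/proper_card/properP; split.
    by apply/fintype.subsetP => p; rewrite !inE; apply: lt_trans.
  by exists p1; rewrite !inE ?tb ?ltxx.
rewrite IH // => [|p bp]; last exact/ws/(lt_trans tb bp).
rewrite [X in _ + X]big_mkcond (bigD1_seq b) ?ws //= tb ltxx big1 => [|a ab]; last first.
  case: ifP => // /andP [ta]; rewrite -leNgt le_eqVlt (negbTE ab) /= => alt.
  by apply: no_jump => p; apply/eqP => wpa; apply: (gap p); rewrite wpa.
have -> : [set p | w p < b] = [set p | w p <= t].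
  apply/setP => p; rewrite !inE; case: (lerP (w p) t) => [wt|tw].
    exact: le_lt_trans wt tb.
  by apply/negP => /(gap p tw).
by rewrite /= addr0 addrA subrK.
Qed.

End Telescope.

Definition edge_span (S : finType) (E : {set S * S}) : 'M['F_2]_#|S| :=
  (\sum_(p in E) <<ev p.1 + ev p.2>>)%MS.

Definition span_within (S : finType) (X : {set S}) : 'M['F_2]_#|S| :=
  edge_span [set p | (p.1 \in X) && (p.2 \in X)].

Definition pushmx (S S' : finType) (phi : S -> S') : 'M['F_2]_(#|S|, #|S'|) :=
  \matrix_(i < #|S|) ev (phi (enum_val i)).

Lemma ev_addxx (S : finType) (x : S) : ev x + ev x = 0.
Proof.
have two0 : (2%:R : 'F_2) = 0 by apply/val_inj.
by rewrite -mulr2n -scaler_nat two0 scale0r.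
Qed.

Section EdgeSpans.
Variables S S' : finType.

Lemma edge_span_diag (E : {set S * S}) :
  (forall p, p \in E -> p.1 = p.2) -> edge_span E = 0.
Proof. by move=> diag; apply: big1 => p /diag ->; rewrite ev_addxx genmx0. Qed.

Lemma kerplusE (R : realType) (d : S -> S -> R) r :
  kerplus d r = edge_span [set p | d p.1 p.2 <= r].
Proof. by apply: eq_bigl => p; rewrite inE. Qed.

Lemma kerminusE (R : realType) (d : S -> S -> R) r :
  kerminus d r = edge_span [set p | d p.1 p.2 < r].
Proof. by apply: eq_bigl => p; rewrite inE. Qed.

Lemma kerminus_sub (R : realType) (d : S -> S -> R) r : (kerminus d r <= kerplus d r)%MS.
Proof. by apply/sumsmx_subP => p /ltW dpr; apply: (sumsmx_sup p). Qed.

Lemma ev_pushmx (phi : S -> S') x : ev x *m pushmx phi = ev (phi x).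
Proof. by rewrite /ev -rowE rowK enum_rankK. Qed.

Lemma edge_span_push (phi : S -> S') (E : {set S * S}) (E' : {set S' * S'}) :
  (forall p, p \in E -> (phi p.1, phi p.2) \in E') ->
  (edge_span E *m pushmx phi <= edge_span E')%MS.
Proof.
move=> phiE; rewrite sumsmxMr_gen; apply/sumsmx_subP => p pE.
rewrite genmxE (eqmxMr _ (genmxE _)) mulmxDl !ev_pushmx.
by apply: (sumsmx_sup (phi p.1, phi p.2)); rewrite ?phiE ?genmxE.
Qed.

Lemma pushmx_cover (phi : S -> S') (E' : {set S' * S'}) :
  (forall y, exists x, (y, phi x) \in E') -> (1%:M <= pushmx phi + edge_span E')%MS.
Proof.
move=> near; apply/row_subP => i; rewrite row1; have [x yx] := near (enum_val i).
have -> : delta_mx 0 i = ev (phi x) + (ev (enum_val i) + ev (phi x)).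
  by rewrite addrC -addrA ev_addxx addr0 /ev enum_valK.
apply: addmx_sub_adds; first by rewrite -ev_pushmx /ev -rowE row_sub.
by apply: (sumsmx_sup (enum_val i, phi x)); rewrite ?genmxE.
Qed.

Lemma codim_edge_spans_push (phi : S -> S') (E1 E2 : {set S * S})
    (E1' E2' : {set S' * S'}) :
  (forall p, p \in E1 -> (phi p.1, phi p.2) \in E1') ->
  (forall p, p \in E2 -> (phi p.1, phi p.2) \in E2') ->
  (forall y, exists x, (y, phi x) \in E1') ->
  (#|S'| + \rank (edge_span E1 + edge_span E2) <=
   #|S| + \rank (edge_span E1' + edge_span E2'))%N.
Proof.
move=> phiE1 phiE2 near; apply: (codim_le_of_cover (Phi := pushmx phi)).
  by rewrite addsmxMr addsmxS ?edge_span_push.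
by apply: submx_trans (pushmx_cover near) _; rewrite addsmxS ?addsmxSl.
Qed.

End EdgeSpans.

Lemma metric_ge0 (R : realType) (S : Type) (d : S -> S -> R) :
  is_metric d -> forall x y, 0 <= d x y.
Proof.
move=> [d0 [dC dtri]] x y; have := dtri x y x.
by rewrite (dC y x) (proj2 (d0 x x) erefl); lra.
Qed.

Lemma qdim_sub m p n (A : 'M['F_2]_(m, n)) (B : 'M['F_2]_(p, n)) :
  (B <= A)%MS -> qdim A B = (\rank A - \rank B)%N.
Proof. by move=> /capmx_idPr AB; rewrite /qdim AB. Qed.

Definition mult_within (R : realType) (T : finType) (d : T -> T -> R) m
    (B : 'M['F_2]_(m, #|T|)) (b : R) : int :=
  (\rank (B :&: kerplus d b))%:Z - (\rank (B :&: kerminus d b))%:Z.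

Lemma qdim_caps m1 m2 n (A Am : 'M['F_2]_(m1, n)) (P Q : 'M['F_2]_(m2, n)) :
  (Am <= A)%MS -> (Q <= P)%MS ->
  (qdim (A :&: P)%MS (Am :&: P + A :&: Q)%MS)%:Z =
  ((\rank (A :&: P))%:Z - (\rank (A :&: Q))%:Z) -
  ((\rank (Am :&: P))%:Z - (\rank (Am :&: Q))%:Z).
Proof.
move=> AmA QP.
have sub : (Am :&: P + A :&: Q <= A :&: P)%MS by rewrite addsmx_sub !capmxS ?submx_refl.
rewrite qdim_sub //; have := mxrank_adds_caps AmA QP; have := mxrankS sub; lia.
Qed.

Section Barcode.
Variables (R : realType) (T : finType) (d : T -> T -> R) (X : {set T}).
Hypothesis d_metric : is_metric d.
Local Notation dX := (dsub d (X := X)).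

Lemma mem_pos_dists x y :
  x \in X -> y \in X -> 0 < d x y -> d x y \in pos_dists d X.
Proof.
move=> xX yX dxy; rewrite mem_undup; apply/mapP; exists (x, y) => //.
by rewrite mem_filter dxy mem_enum inE xX yX.
Qed.

Lemma pos_dists_gt0 a : a \in pos_dists d X -> 0 < a.
Proof. by rewrite mem_undup => /mapP [p]; rewrite mem_filter => /andP [dp _] ->. Qed.

Lemma f0_edge_span :
  (edge_span [set: subX X * subX X] *m f0mx X :=: span_within X)%MS.
Proof.
apply/eqmxP/andP; split.
  by apply: edge_span_push => p _; rewrite inE; apply/andP; split; apply: valP.
apply/sumsmx_subP => -[x y]; rewrite inE /= => /andP [xX yX]; rewrite genmxE.
pose u : subX X := exist _ x xX; pose v : subX X := exist _ y yX.
have -> : ev x + ev y = (ev u + ev v) *m f0mx X by rewrite mulmxDl !ev_pushmx.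
by apply/submxMr/(sumsmx_sup (u, v)); rewrite ?genmxE.
Qed.

Lemma Mf_mult_within a b :
  (Mf d X a b)%:Z = mult_within d (kerplus dX a *m f0mx X) b -
                    mult_within d (kerminus dX a *m f0mx X) b.
Proof. by rewrite /Mf /= qdim_caps ?kerminus_sub ?submxMr ?kerminus_sub. Qed.

Lemma sum_Mf b :
  (\sum_(a <- pos_dists d X) Mf d X a b)%:Z = mult_within d (span_within X) b.
Proof.
pose G (E : {set subX X * subX X}) := mult_within d (edge_span E *m f0mx X) b.
have -> : (\sum_(a <- pos_dists d X) Mf d X a b)%:Z =
    \sum_(a <- pos_dists d X | 0 < a)
      (G [set p | dX p.1 p.2 <= a] - G [set p | dX p.1 p.2 < a]).
  rewrite -natz natr_sum big_seq_cond [RHS]big_seq_cond.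
  apply: eq_big => [a|a _]; first by case: (boolP (a \in _)) => // /pos_dists_gt0 ->.
  by rewrite natz Mf_mult_within kerplusE kerminusE.
rewrite (telescope_sublevels (w := fun p => dX p.1 p.2)) ?undup_uniq //; last first.
  by move=> p dp; apply: mem_pos_dists => //; apply: valP.
rewrite /G (edge_span_diag (E := [set p | _ <= 0])) => [|p]; last first.
  rewrite inE => dp; apply: val_inj; apply/(proj1 d_metric).
  by apply/le_anti; rewrite dp metric_ge0.
rewrite mul0mx /mult_within !cap0mx mxrank0 subrr subr0.
by rewrite !(cap_eqmx f0_edge_span (eqmx_refl _)).
Qed.

Lemma Nf_rankE b :
  Nf d X b = (\rank (kerplus d b + span_within X))%:Z -
             (\rank (kerminus d b + span_within X))%:Z.
Proof.
rewrite /Nf sum_Mf /mult /mult_within qdim_sub ?kerminus_sub //.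
have := mxrank_sum_cap (kerplus d b) (span_within X); rewrite capmxC.
have := mxrank_sum_cap (kerminus d b) (span_within X); rewrite capmxC.
have := mxrankS (kerminus_sub d b); lia.
Qed.

Lemma Nf_ge0 b : 0 <= Nf d X b.
Proof. by rewrite Nf_rankE subr_ge0 lez_nat mxrankS ?addsmxS ?kerminus_sub. Qed.

Lemma Nf_eq0 b : (forall x y, d x y != b) -> Nf d X b = 0.
Proof.
move=> nb; rewrite Nf_rankE kerplusE kerminusE.
suff -> : [set p | d p.1 p.2 <= b] = [set p | d p.1 p.2 < b] by rewrite subrr.
by apply/setP => p; rewrite !inE lt_def eq_sym nb.
Qed.

End Barcode.

Lemma count_allpairs_fst (A B : Type) (P : pred A) (s : seq A) (t : A -> seq B) :
  count (fun u => P u.1) [seq (a, b) | a <- s, b <- t a] =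
  (\sum_(a <- s | P a) size (t a))%N.
Proof.
elim: s => [|a s IH]; first by rewrite big_nil.
rewrite /= count_cat big_cons IH count_map (eq_count (a2 := fun=> P a)) //.
by case: (P a); rewrite ?count_pred0 // count_predT.
Qed.

Definition bars (R : realType) (T : finType) (d : T -> T -> R) (X : {set T}) :
    seq (R * nat) :=
  sort (fun s t : R * nat => t.1 <= s.1)
    [seq (b, l) | b <- pos_dists d [set: T], l <- iota 1 `|Nf d X b|%N].

Section Bars.
Variables (R : realType) (T : finType) (d : T -> T -> R) (X : {set T}).
Hypothesis d_metric : is_metric d.

Lemma Nf_absE b : (`|Nf d X b|%N)%:Z = Nf d X b.
Proof. by rewrite gez0_abs ?Nf_ge0. Qed.

Lemma mem_bars s : s \in bars d X <-> inRep (Nf d X) s.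
Proof.
rewrite mem_sort /inRep; case: s => b l /=; split.
  case/allpairsPdep => [c [k [cD]]]; rewrite mem_iota => /andP [k1 kN] [-> ->].
  split; first exact: pos_dists_gt0 cD.
  by split=> //; rewrite -Nf_absE lez_nat -ltnS -(addn1 `|_|%N) addnC.
move=> [b0 [l1 lN]]; apply/allpairsPdep; exists b, l; split=> //; last first.
  by rewrite mem_iota l1 add1n ltnS -lez_nat Nf_absE.
have [x [y dxy]] : exists x y, d x y = b.
  apply/not_existsP => nb; move: lN; rewrite Nf_eq0 // => [|x y].
    by rewrite lez_nat leqNgt l1.
  by apply/eqP => dxy; apply: (nb x); exists y.
by rewrite -dxy mem_pos_dists ?inE // dxy.
Qed.

Lemma uniq_bars : uniq (bars d X).
Proof.
rewrite sort_uniq allpairs_uniq_dep ?undup_uniq // => [b _|[b l] [c k] _ _ [-> ->] //].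
exact: iota_uniq.
Qed.

Lemma sorted_bars : sorted >=%R [seq s.1 | s <- bars d X].
Proof. by rewrite sorted_map; apply: sort_sorted => s t; apply: le_total. Qed.

Lemma count_bars r : 0 <= r ->
  (count (fun s => r < s.1) (bars d X))%:Z =
  (\rank (edge_span [set: T * T] + span_within X))%:Z -
  (\rank (kerplus d r + span_within X))%:Z.
Proof.
move=> r0; rewrite (permP (permEl (perm_sort _ _))) count_allpairs_fst -natz natr_sum.
under eq_bigr do rewrite size_iota natz Nf_absE (Nf_rankE X d_metric) kerplusE kerminusE.
rewrite (telescope_sublevels (w := fun p => d p.1 p.2)
  (fun E => (\rank (edge_span E + span_within X))%:Z)) ?undup_uniq ?kerplusE //.
by move=> p dp; rewrite mem_pos_dists ?inE // (le_lt_trans r0).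
Qed.

End Bars.

Definition gh_map (R : realType) (T T' : finType) (d : T -> T -> R) (d' : T' -> T' -> R)
    (X : {set T}) (X' : {set T'}) (c : R) (phi : T -> T') : Prop :=
  [/\ forall x y, d' (phi x) (phi y) <= d x y + c,
      forall x, x \in X -> phi x \in X' &
      forall y, exists x, d' y (phi x) <= c].

Lemma gh_map_ge0 (R : realType) (T T' : finType) (d : T -> T -> R) (d' : T' -> T' -> R)
    (X : {set T}) (X' : {set T'}) c phi :
  is_metric d -> is_metric d' -> (0 < #|X|)%N -> gh_map d d' X X' c phi -> 0 <= c.
Proof.
move=> [dE _] [d'E _] /card_gt0P [x _] [phi_dist _ _].
by have := phi_dist x x; rewrite (proj2 (dE x x)) // (proj2 (d'E _ _)) // add0r.
Qed.

Section Comparison.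
Variables (R : realType) (T T' : finType) (d : T -> T -> R) (d' : T' -> T' -> R).
Variables (X : {set T}) (X' : {set T'}).

Lemma codim_edges_le c phi : gh_map d d' X X' c phi ->
  (#|T'| + \rank (edge_span [set: T * T] + span_within X) <=
   #|T| + \rank (edge_span [set: T' * T'] + span_within X'))%N.
Proof.
case=> _ phiX phi_near; apply: (codim_edge_spans_push (phi := phi)) => [p|p|y].
- by rewrite !inE.
- by rewrite !inE => /andP [/phiX -> /phiX ->].
- by have [x _] := phi_near y; exists x; rewrite inE.
Qed.

Lemma codim_kerplus_le c phi r : 0 <= r -> gh_map d d' X X' c phi ->
  (#|T'| + \rank (kerplus d r + span_within X) <=
   #|T| + \rank (kerplus d' (r + c) + span_within X'))%N.
Proof.
move=> r0 [phi_dist phiX phi_near]; rewrite !kerplusE.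
apply: (codim_edge_spans_push (phi := phi)) => [p|p|y].
- by rewrite !inE => dp; apply: le_trans (phi_dist _ _) _; rewrite lerD2r.
- by rewrite !inE => /andP [/phiX -> /phiX ->].
- by have [x yx] := phi_near y; exists x; rewrite inE; apply: le_trans yx _; rewrite lerDr.
Qed.

End Comparison.

Lemma count_bars_le (R : realType) (T T' : finType) (d : T -> T -> R)
    (d' : T' -> T' -> R) (X : {set T}) (X' : {set T'}) c phi psi :
  is_metric d -> is_metric d' -> 0 <= c ->
  gh_map d d' X X' c phi -> gh_map d' d X' X c psi ->
  forall r, 0 <= r ->
  (count (fun s => (r + c < s.1)%R) (bars d' X') <=
   count (fun s => (r < s.1)%R) (bars d X))%N.
Proof.
move=> dm d'm c0 phi_gh psi_gh r r0.
rewrite -lez_nat !count_bars ?addr_ge0 //.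
have := codim_kerplus_le r0 phi_gh; have := codim_edges_le psi_gh; lia.
Qed.

Section SortedMatching.
Variable R : realType.
Implicit Types (L : seq R) (a c e r : R).

Lemma count_gt_sorted L a i : sorted >=%R L ->
  (i < count (fun x => (a < x)%R) L)%N = (i < size L)%N && (a < nth 0 L i).
Proof.
elim: L i => [|x L IH] i //= /[dup] /path_sorted L_sorted.
rewrite (path_sortedE ge_trans) => /andP [/allP Lx _].
have [ax|xa] := ltP a x; first by case: i => [|i] //=; rewrite add1n ltnS IH.
have -> : count (fun y => (a < y)%R) L = 0%N.
  apply/eqP; rewrite -leqn0 leqNgt -has_count; apply/hasPn => y /Lx yx.
  by rewrite -leNgt (le_trans yx).
case: i => [|i] /=; first by rewrite ltNge xa.
rewrite ltnS; case: (ltnP i (size L)) => //= iL; apply/esym/negbTE.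
by rewrite -leNgt (le_trans (Lx _ (mem_nth 0 iL)) xa).
Qed.

Lemma nth_shift_le L L' c : sorted >=%R L -> sorted >=%R L' -> {in L', forall x, 0 < x} ->
  (forall r, 0 <= r ->
     (count (fun x => (r + c < x)%R) L <= count (fun x => (r < x)%R) L')%N) ->
  forall i, (i < size L)%N ->
  if (i < size L')%N then nth 0 L i - c <= nth 0 L' i else nth 0 L i <= c.
Proof.
move=> L_sorted L'_sorted L'_pos shift i iL.
have [Lic|cLi] := lerP (nth 0 L i) c.
  by case: ifP => // iL'; have := L'_pos _ (mem_nth 0 iL'); lra.
have shift_nth r : 0 <= r -> r < nth 0 L i - c -> (i < size L')%N && (r < nth 0 L' i).
  move=> r0 rLi; rewrite -count_gt_sorted //; apply: leq_trans (shift r r0).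
  by rewrite count_gt_sorted // iL /=; lra.
have /andP [iL' _] := shift_nth 0 (lexx 0) ltac:(lra).
rewrite iL' leNgt; apply/negP => lt_i.
by have /andP [_] := shift_nth _ (ltW (L'_pos _ (mem_nth 0 iL'))) lt_i; rewrite ltxx.
Qed.

Lemma count_gt_gap L a : exists2 e, 0 < e & forall x, x \in L -> a < x -> a + e < x.
Proof.
elim: L => [|x L [e e0 gapL]]; first by exists 1.
have [ax|xa] := ltP a x; last first.
  by exists e => // y; rewrite inE => /orP [/eqP ->|/gapL //]; rewrite ltNge xa.
exists (Num.min e ((x - a) / 2)); first by rewrite lt_min e0 divr_gt0 ?subr_gt0.
have min_e : Num.min e ((x - a) / 2) <= e by rewrite ge_min lexx.
have min_x : Num.min e ((x - a) / 2) <= (x - a) / 2 by rewrite ge_min lexx orbT.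
move=> y; rewrite inE => /orP [/eqP -> _|/gapL gapy /gapy]; lra.
Qed.

Lemma count_gt_le_limit L L' a b :
  (forall e, 0 < e ->
     (count (fun x => (a + e < x)%R) L <= count (fun x => (b < x)%R) L')%N) ->
  (count (fun x => (a < x)%R) L <= count (fun x => (b < x)%R) L')%N.
Proof.
move=> shift; have [e e0 gap] := count_gt_gap L a.
rewrite (@eq_in_count _ _ (fun x => (a + e < x)%R)) ?shift // => x xL.
by apply/idP/idP => [/(gap x xL) //|]; apply: le_lt_trans; rewrite lerDl ltW.
Qed.

Local Notation x0 := ((0 : R), 0%N).

Lemma index_matching (A B : R * nat -> Prop) (P P' : seq (R * nat)) c :
  uniq P -> uniq P' -> (forall s, A s <-> s \in P) -> (forall t, B t <-> t \in P') ->
  (forall i, (i < size P)%N -> (i < size P')%N ->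
     `|(nth x0 P i).1 - (nth x0 P' i).1| <= c) ->
  (forall i, (i < size P)%N -> (size P' <= i)%N -> (nth x0 P i).1 <= c) ->
  (forall i, (i < size P')%N -> (size P <= i)%N -> (nth x0 P' i).1 <= c) ->
  exists sigma, delta_matching c A B sigma.
Proof.
move=> P_uniq P'_uniq AP BP close leftover leftover'.
exists (fun s => if (s \in P) && (index s P < size P')%N
                 then Some (nth x0 P' (index s P)) else None).
split.
- split=> [s t _|s1 s2 t /AP s1P /AP s2P].
    by case: ifP => // /andP [_ iP'] [<-]; apply/BP/mem_nth.
  rewrite s1P s2P /=; case: ifP => // i1 [<-]; case: ifP => // i2 [] /eqP.
  rewrite nth_uniq // => /eqP /(congr1 (nth x0 P)).
  by rewrite !nth_index.
- move=> s t /AP sP; rewrite sP /=; case: ifP => // iP' [<-].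
  by rewrite -{1}(nth_index x0 sP) close ?index_mem.
- move=> s /AP sP; rewrite sP /=; case: ifP => // /negbT; rewrite -leqNgt => iP' _.
  by rewrite -(nth_index x0 sP) leftover ?index_mem.
- move=> t /BP tP' unmatched; rewrite -(nth_index x0 tP') leftover' ?index_mem //.
  rewrite leqNgt; apply/negP => iP; apply: unmatched.
  exists (nth x0 P (index t P')); split; first exact/AP/mem_nth.
  by rewrite mem_nth //= index_uniq // index_mem tP' nth_index.
Qed.

Lemma delta_matching_of_counts (A B : R * nat -> Prop) (P P' : seq (R * nat)) c :
  uniq P -> uniq P' -> (forall s, A s <-> s \in P) -> (forall t, B t <-> t \in P') ->
  sorted >=%R [seq s.1 | s <- P] -> sorted >=%R [seq t.1 | t <- P'] ->
  (forall s, A s -> 0 < s.1) -> (forall t, B t -> 0 < t.1) ->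
  (forall r, 0 <= r ->
     (count (fun s => (r + c < s.1)%R) P <= count (fun t => (r < t.1)%R) P')%N) ->
  (forall r, 0 <= r ->
     (count (fun t => (r + c < t.1)%R) P' <= count (fun s => (r < s.1)%R) P)%N) ->
  exists sigma, delta_matching c A B sigma.
Proof.
move=> P_uniq P'_uniq AP BP P_sorted P'_sorted A_pos B_pos shift shift'.
have fst_pos (Q : seq (R * nat)) (C : R * nat -> Prop) : (forall s, C s <-> s \in Q) ->
    (forall s, C s -> 0 < s.1) -> {in [seq s.1 | s <- Q], forall x, 0 < x}.
  by move=> CQ C_pos _ /mapP [s /CQ /C_pos s_pos ->].
have cnt r : 0 <= r -> (count (fun x => (r + c < x)%R) [seq s.1 | s <- P] <=
                         count (fun x => (r < x)%R) [seq t.1 | t <- P'])%N.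
  by move=> r0; rewrite !count_map; apply: shift.
have cnt' r : 0 <= r -> (count (fun x => (r + c < x)%R) [seq t.1 | t <- P'] <=
                          count (fun x => (r < x)%R) [seq s.1 | s <- P])%N.
  by move=> r0; rewrite !count_map; apply: shift'.
have := nth_shift_le P_sorted P'_sorted (fst_pos _ _ BP B_pos) cnt.
have := nth_shift_le P'_sorted P_sorted (fst_pos _ _ AP A_pos) cnt'.
rewrite !size_map => nth' nth.
apply: (index_matching P_uniq P'_uniq AP BP) => [i iP iP'|i iP P'i|i iP' Pi].
- have := nth i iP; have := nth' i iP'; rewrite iP iP' !(nth_map x0) // => h1 h2.
  by rewrite ler_norml; apply/andP; split; lra.
- by have := nth i iP; rewrite ltnNge P'i (nth_map x0).
- by have := nth' i iP'; rewrite ltnNge Pi (nth_map x0).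
Qed.

End SortedMatching.

Section GromovHausdorff.
Local Open Scope classical_set_scope.
Variable R : realType.

Lemma hausdorff_lt_near (M : Type) (dM : M -> M -> R) (U U' : finType)
    (f : U -> M) (f' : U' -> M) (P : set U) (P' : set U') v :
  P' !=set0 -> hausdorff dM (f @` P) (f' @` P') < v ->
  forall u, P u -> exists2 u', P' u' & dM (f u) (f' u') < v.
Proof.
move=> [u0 P'u0] hv u Pu; pose h w := inf [set dM (f w) b | b in f' @` P'].
have : h u < v.
  apply: le_lt_trans hv; rewrite /hausdorff le_max; apply/orP; left.
  apply: ub_le_sup; last by exists (f u) => //; exists u.
  exists (\sum_(w : U) `|h w|) => _ [_ [w Pw <-] <-].
  by rewrite (bigD1 w) //= (le_trans (ler_norm _)) // lerDl sumr_ge0.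
case/inf_lt => [|_ [_ [u' P'u' <-] <-] ?]; last by exists u'.
by exists (dM (f u) (f' u0)); exists (f' u0) => //; exists u0.
Qed.

Lemma hausdorff_flip (M : Type) (dM : M -> M -> R) (A B : set M) :
  hausdorff (fun a b => dM b a) B A = hausdorff dM A B.
Proof. by rewrite /hausdorff maxC. Qed.

Definition union_dist (T T' : Type) (d : T -> T -> R) (d' : T' -> T' -> R) (K : R)
    (a b : T + T') : R :=
  match a, b with
  | inl x, inl y => d x y
  | inr x, inr y => d' x y
  | _, _ => K
  end.

Lemma union_dist_metric (T T' : Type) (d : T -> T -> R) (d' : T' -> T' -> R) K :
  is_metric d -> is_metric d' -> 0 < K ->
  (forall x y, d x y <= K) -> (forall x y, d' x y <= K) ->
  is_metric (union_dist d d' K).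
Proof.
move=> dm d'm K0 dK d'K; have d0 := metric_ge0 dm; have d'0 := metric_ge0 d'm.
have [dE [dC dtri]] := dm; have [d'E [d'C d'tri]] := d'm.
have K_neq0 : K <> 0 by move=> K_eq0; move: K0; rewrite K_eq0 ltxx.
split; [case=> x [] y /=|split; first by case=> x [] y /=; rewrite 1?dC 1?d'C].
- by split=> [/dE -> //|[->]]; apply/dE.
- by split=> // /K_neq0.
- by split=> // /K_neq0.
- by split=> [/d'E -> //|[->]]; apply/d'E.
case=> x [] y [] z /=; rewrite ?dtri ?d'tri //.
- by have := d0 x y; lra.
- by have := dK x z; lra.
- by have := d'0 y z; lra.
- by have := d0 y z; lra.
- by have := d'K x z; lra.
- by have := d'0 x y; lra.
Qed.

Lemma le_sum_dist (T : finType) (d : T -> T -> R) :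
  is_metric d -> forall x y, d x y <= \sum_(p : T * T) d p.1 p.2.
Proof.
move=> dm x y; rewrite (bigD1 (x, y)) //= lerDl.
by apply: sumr_ge0 => p _; apply: metric_ge0.
Qed.

Lemma dGH_approx (T T' : finType) (d : T -> T -> R) (d' : T' -> T' -> R)
    (X : {set T}) (X' : {set T'}) v :
  is_metric d -> is_metric d' -> dGH d d' X X' < v ->
  exists (M : Type) (dM : M -> M -> R) (g : T -> M) (g' : T' -> M),
    [/\ is_metric dM, isometric d dM g, isometric d' dM g',
        hausdorff dM (g @` fset_to_set X) (g' @` fset_to_set X') < v &
        hausdorff dM (range g) (range g') < v].
Proof.
move=> dm d'm; case/inf_lt => [|_ [M [dM [g [g' [dMm gi g'i ->]]]]]]; last first.
  by rewrite gt_max => /andP [hX hZ]; exists M, dM, g, g'.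
pose K := 1 + \sum_(p : T * T) d p.1 p.2 + \sum_(p : T' * T') d' p.1 p.2.
have sum_ge0 (S : finType) (e : S -> S -> R) :
    is_metric e -> 0 <= \sum_(p : S * S) e p.1 p.2.
  by move=> em; apply: sumr_ge0 => p _; apply: metric_ge0.
have [s0 s0'] := (sum_ge0 _ _ dm, sum_ge0 _ _ d'm).
eexists; exists (T + T')%type, (union_dist d d' K), inl, inr; split=> //.
apply: union_dist_metric => // [|x y|x y]; rewrite /K.
- lra.
- by have := le_sum_dist dm x y; lra.
- by have := le_sum_dist d'm x y; lra.
Qed.

Lemma gh_map_of_near (T T' : finType) (d : T -> T -> R) (d' : T' -> T' -> R)
    (X : {set T}) (X' : {set T'}) (M : Type) (dM : M -> M -> R) (g : T -> M)
    (g' : T' -> M) v :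
  is_metric dM -> isometric d dM g -> isometric d' dM g' ->
  (forall x, exists y, (x \in X -> y \in X') /\ dM (g x) (g' y) < v) ->
  (forall y, exists x, dM (g x) (g' y) < v) ->
  exists phi, gh_map d d' X X' (2 * v) phi.
Proof.
move=> [_ [dMC dMtri]] gi g'i near near'; have [phi phiP] := choice near.
exists phi; split=> [x y|x /(phiP x).1 //|y].
- rewrite -g'i -gi; have := dMtri (g' (phi x)) (g x) (g' (phi y)).
  have := dMtri (g x) (g y) (g' (phi y)); have := dMC (g' (phi x)) (g x).
  by have := (phiP x).2; have := (phiP y).2; lra.
- have [x yx] := near' y; exists x; rewrite -g'i.
  have := dMtri (g' y) (g x) (g' (phi x)); have := dMC (g' y) (g x).
  by have := (phiP x).2; lra.
Qed.

End GromovHausdorff.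

Section Correspondence.
Local Open Scope classical_set_scope.
Variables (R : realType) (T T' : finType) (d : T -> T -> R) (d' : T' -> T' -> R).
Variables (X : {set T}) (X' : {set T'}).
Hypotheses (d_metric : is_metric d) (d'_metric : is_metric d').
Hypotheses (X_gt0 : (0 < #|X|)%N) (X'_gt0 : (0 < #|X'|)%N).

Lemma gh_maps_exist c : 2 * dGH d d' X X' < c ->
  (exists phi, gh_map d d' X X' c phi) /\ (exists psi, gh_map d' d X' X c psi).
Proof.
move=> Dc; have D_half : dGH d d' X X' < c / 2 by lra.
have [M [dM [g [g' [dMm gi g'i hX hZ]]]]] := dGH_approx d_metric d'_metric D_half.
have nonempty (S : finType) (A : {set S}) : (0 < #|A|)%N -> fset_to_set A !=set0.
  by case/card_gt0P => x xA; exists x.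
have full (S : finType) (A : {set S}) : (0 < #|A|)%N -> [set: S] !=set0.
  by case/card_gt0P => x _; exists x.
have nearX := hausdorff_lt_near (nonempty _ _ X'_gt0) hX.
have nearZ := hausdorff_lt_near (full _ _ X'_gt0) hZ.
rewrite -hausdorff_flip in hX; rewrite -hausdorff_flip in hZ.
have nearX' := hausdorff_lt_near (nonempty _ _ X_gt0) hX.
have nearZ' := hausdorff_lt_near (full _ _ X_gt0) hZ.
have [_ [dMC _]] := dMm; have -> : c = 2 * (c / 2) by lra.
split; [apply: (gh_map_of_near dMm gi g'i) => [x|y]
       |apply: (gh_map_of_near dMm g'i gi) => [y|x]].
- case: (boolP (x \in X)) => [/nearX [y]|_]; first by exists y.
  by have [y _] := nearZ x I; exists y.
- by have [x] := nearZ' y I; exists x.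
- case: (boolP (y \in X')) => [/nearX' [x]|_]; first by exists x; rewrite dMC.
  by have [x _] := nearZ' y I; exists x; rewrite dMC.
- by have [y _] := nearZ x I; exists y; rewrite dMC.
Qed.

End Correspondence.

Unset Implicit Arguments.

Theorem proposition6p3 (R : realType) (T T' : finType)
  (d : T -> T -> R) (d' : T' -> T' -> R) (X : {set T}) (X' : {set T'}) :
  is_metric d -> is_metric d' -> (0 < #|X|)%N -> (0 < #|X'|)%N ->
  exists sigma : R * nat -> option (R * nat),
    delta_matching (2 * dGH d d' X X') (inRep (Nf d X)) (inRep (Nf d' X')) sigma.
Proof.
move=> dm d'm X0 X'0; set D := dGH d d' X X'.
have shifted_counts c r : 2 * D < c -> 0 <= r ->
    (count (fun s => (r + c < s.1)%R) (bars d' X') <=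
     count (fun s => (r < s.1)%R) (bars d X))%N /\
    (count (fun s => (r + c < s.1)%R) (bars d X) <=
     count (fun s => (r < s.1)%R) (bars d' X'))%N.
  move=> Dc r0; have [[phi phi_gh] [psi psi_gh]] := gh_maps_exist dm d'm X0 X'0 Dc.
  have c0 := gh_map_ge0 dm d'm X0 phi_gh.
  by split; [apply: (count_bars_le dm d'm c0 phi_gh psi_gh)
            |apply: (count_bars_le d'm dm c0 psi_gh phi_gh)].
have limit_counts (P P' : seq (R * nat)) r :
    (forall e, 0 < e -> (count (fun s => (r + (2 * D + e) < s.1)%R) P <=
                         count (fun s => (r < s.1)%R) P')%N) ->
    (count (fun s => (r + 2 * D < s.1)%R) P <= count (fun s => (r < s.1)%R) P')%N.
  move=> shift.
  have := @count_gt_le_limit R [seq s.1 | s <- P] [seq s.1 | s <- P'] (r + 2 * D) r.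
  by rewrite !count_map; apply=> e e0; rewrite count_map -addrA; apply: shift.
apply: (delta_matching_of_counts (uniq_bars d X) (uniq_bars d' X')
          (fun s => iff_sym (mem_bars X dm s)) (fun s => iff_sym (mem_bars X' d'm s))
          (sorted_bars d X) (sorted_bars d' X')) => [s []|s []|r r0|r r0] //.
- apply: limit_counts => e e0.
  by have [] := shifted_counts (2 * D + e) r ltac:(lra) r0.
- apply: limit_counts => e e0.
  by have [] := shifted_counts (2 * D + e) r ltac:(lra) r0.
Qed.
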